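(* Let $\mathscr{X}$ be a complex Banach space and $\mathscr{M}_1,\mathscr{M}_2,\mathscr{M}_3$ closed subspaces such that $\mathscr{X}=\mathscr{M}_i\oplus\mathscr{M}_j$ for all $i\neq j$. Let $V_1\colon\mathscr{M}_2\to\mathscr{M}_3$, $V_2\colon\mathscr{M}_1\to\mathscr{M}_3$, $V_3\colon\mathscr{M}_1\to\mathscr{M}_2$ be isomorphisms with $\mathscr{M}_1=\{x+V_1x:x\in\mathscr{M}_2\}$, $\mathscr{M}_2=\{x+V_2x:x\in\mathscr{M}_1\}$, $\mathscr{M}_3=\{x+V_3x:x\in\mathscr{M}_1\}$, and define $W_1,W_2,W_3\in\mathcal{B}(\mathscr{X})$ by $W_1(x_2+x_3)=V_1^{-1}x_3+V_1x_2$ ($x_2\in\mathscr{M}_2,x_3\in\mathscr{M}_3$), $W_2(x_1+x_3)=V_2^{-1}x_3+V_2x_1$ ($x_1\in\mathscr{M}_1,x_3\in\mathscr{M}_3$), $W_3(x_1+x_2)=V_3^{-1}x_2+V_3x_1$ ($x_1\in\mathscr{M}_1,x_2\in\mathscr{M}_2$). Let $\mathfrak{D}=\{\{0\},\mathscr{M}_1,\mathscr{M}_2,\mathscr{X}\}$ and $\mathfrak{T}=\{\{0\},\mathscr{M}_1,\mathscr{M}_2,\mathscr{M}_3,\mathscr{X}\}$. Then $\mathrm{Col}(\mathfrak{D})=\mathrm{Grp}(\mathrm{Alg}(\mathfrak{D}))\rtimes\mathcal{O}(\mathfrak{D})$ and $\mathrm{Col}(\mathfrak{T})=\mathrm{Grp}(\mathrm{Alg}(\mathfrak{T}))\rtimes\mathcal{O}(\mathfrak{T})$,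 where $\mathcal{O}(\mathfrak{D})=\{I,W_3\}$ and $\mathcal{O}(\mathfrak{T})=\{I,W_1,W_2,W_3,W_1W_2,W_2W_1\}$.
   Context: $\mathscr{X}=\mathscr{M}\oplus\mathscr{N}$ means $\mathscr{M}\cap\mathscr{N}=\{0\}$ and $\mathscr{M}+\mathscr{N}=\mathscr{X}$. $\mathrm{Alg}(\mathfrak{F})$ is the set of bounded operators leaving every subspace of $\mathfrak{F}$ invariant; $\mathrm{Grp}(\mathcal{A})$ is the group of invertible $S\in\mathcal{A}$ with $S^{-1}\in\mathcal{A}$. $\mathrm{Col}(\mathfrak{F})$ is the group of invertible $S\in\mathcal{B}(\mathscr{X})$ such that for every closed subspace $\mathscr{M}$: $\mathscr{M}\in\mathfrak{F}$ iff $S\mathscr{M}\in\mathfrak{F}$. For a subgroup $\mathcal{O}\subseteq\mathrm{Col}(\mathfrak{F})$, the notation $\mathrm{Col}(\mathfrak{F})=\mathrm{Grp}(\mathrm{Alg}(\mathfrak{F}))\rtimes\mathcal{O}$ means $\mathcal{O}$ is a subgroup of $\mathrm{Col}(\mathfrak{F})$ with $\mathrm{Col}(\mathfrak{F})=\{AT:A\in\mathrm{Grp}(\mathrm{Alg}(\mathfrak{F})),T\in\mathcal{O}\}$ and $\mathrm{Grp}(\mathrm{Alg}(\mathfrak{F}))\cap\mathcal{O}=\{I\}$. *)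

From HB Require Import structures.
From mathcomp Require Import all_boot all_order all_algebra.
From mathcomp Require Import all_classical all_reals all_analysis.
From mathcomp Require Import complex.
Import numFieldNormedType.Exports.
Local Open Scope classical_set_scope.
Local Open Scope ring_scope.

Section Defs.
Context {R : realType} {V : completeNormedModType R[i]}.

Definition closed_subspace (M : set V) : Prop :=
  [/\ closed M, M 0,
      (forall x y, M x -> M y -> M (x + y)) &
      (forall (a : R[i]) x, M x -> M (a *: x))].

Definition direct_sum (M N : set V) : Prop :=
  M `&` N = [set 0] /\ (forall z : V, exists x y, M x /\ N y /\ z = x + y).

Definition bounded_op (T : V -> V) : Prop :=
  (forall (a : R[i]) x y, T (a *: x + y) = a *: T x + T y) /\ continuous T.

Definition op_inverse (S S' : V -> V) : Prop :=
  S \o S' = id /\ S' \o S = id.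

Definition invertible_op (S : V -> V) : Prop :=
  bounded_op S /\ exists S', bounded_op S' /\ op_inverse S S'.

Definition Alg (F : set (set V)) (T : V -> V) : Prop :=
  bounded_op T /\ forall M, F M -> T @` M `<=` M.

Definition GrpAlg (F : set (set V)) (S : V -> V) : Prop :=
  Alg F S /\ exists S', Alg F S' /\ op_inverse S S'.

Definition Col (F : set (set V)) (S : V -> V) : Prop :=
  invertible_op S /\
  forall M, closed_subspace M -> (F M <-> F (S @` M)).

Definition semidirect_decomp (F : set (set V)) (O : set (V -> V)) : Prop :=
  [/\
      [/\ O `<=` Col F, O id,
        (forall T1 T2, O T1 -> O T2 -> O (T1 \o T2)) &
        (forall T, O T -> exists T', O T' /\ op_inverse T T')],
      (forall S, Col F S <-> exists A T, GrpAlg F A /\ O T /\ S = A \o T) &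
      (forall S, GrpAlg F S -> O S -> S = id)].

Definition iso_with_inv (M N : set V) (f g : V -> V) : Prop :=
  [/\ (forall (a : R[i]) x y, M x -> M y -> f (a *: x + y) = a *: f x + f y),
      {within M, continuous f}, {within N, continuous g},
      (forall x, M x -> N (f x)) /\ (forall y, N y -> M (g y)) &
      (forall x, M x -> g (f x) = x) /\ (forall y, N y -> f (g y) = y)].

End Defs.

From HB Require Import structures.
From mathcomp Require Import all_boot all_order all_algebra.
From mathcomp Require Import all_classical all_reals all_analysis.
From mathcomp Require Import complex.
From mathcomp Require Import ring lra.
Import numFieldNormedType.Exports.
Import Order.TTheory GRing.Theory Num.Theory.
Local Open Scope classical_set_scope.
Local Open Scope ring_scope.
Set Implicit Arguments.
Unset Strict Implicit.

(* Write phi_ij : M_i -> M_j for the isomorphism whose graph {x + phi_ij x} is the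
   third subspace M_k (so phi_12 = V3, phi_23 = V1, phi_13 = V2).  These maps
   compose consistently, phi_jk (phi_ij x) = phi_ik x, so an operator acting on
   each M_i as phi_{i s(i)} for a permutation s is determined by s; W1, W2, W3
   are the three transpositions and O(T) realises all six permutations.  An
   invertible S in Col(F) permutes the nontrivial members of F; composing S with
   the inverse of the element of O realising that permutation leaves every member
   of F invariant, i.e. lands in Grp(Alg(F)), and only the identity of O does so.
   For D only M1 and M2 can be exchanged, by W3.  Boundedness of the W_i, which
   are defined piecewise on a direct sum, comes from the continuity of the
   projection onto a closed subspace along a closed complement, obtained from a
   Baire category argument as in the open mapping theorem. *)

Lemma continuous_comp_within (T U W : topologicalType) (M : set U)
    (f : U -> W) (g : T -> U) :
  continuous g -> (forall x, M (g x)) -> {within M, continuous f} ->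
  continuous (f \o g).
Proof.
move=> cg Mg /subspace_continuousP cf x; apply: cvg_comp (cf _ (Mg x)).
move=> A hA; have : nbhs x (g @^-1` [set y | M y -> A y]) by apply: cg.
by apply: filterS => t /= /(_ (Mg t)).
Qed.

Section RealNorm.
Variables (R : realType) (V : normedModType R[i]).
Implicit Types (x y : V) (e : R[i]).

Lemma gtc0_Re e : 0 < e -> 0 < complex.Re e /\ e = (complex.Re e)%:C%C.
Proof.
move=> e_gt0; have E : e = (complex.Re e)%:C%C.
  by move: (ger0_Im (ltW e_gt0)); case: e {e_gt0} => a b /= ->.
by split=> //; move: e_gt0; rewrite {1}E ltcR.
Qed.

(* Norms in a complex normed space are real; [rnorm] reads them in [R], where the
   order is total. *)
Definition rnorm x : R := complex.Re `|x|.

Lemma normr_rnorm x : `|x| = (rnorm x)%:C%C.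
Proof. by move: (ger0_Im (normr_ge0 x)); rewrite /rnorm; case: `|x| => a b /= ->. Qed.

Lemma rnorm_ge0 x : 0 <= rnorm x.
Proof. by have := normr_ge0 x; rewrite normr_rnorm ler0c. Qed.

Lemma rnormD x y : rnorm (x + y) <= rnorm x + rnorm y.
Proof. by have := ler_normD x y; rewrite !normr_rnorm -rmorphD /= lecR. Qed.

Lemma rnormN x : rnorm (- x) = rnorm x.
Proof. by rewrite /rnorm normrN. Qed.

Lemma rnormB x y : rnorm (x - y) <= rnorm x + rnorm y.
Proof. by have := rnormD x (- y); rewrite rnormN. Qed.

Lemma rnormBC x y : rnorm (x - y) = rnorm (y - x).
Proof. by rewrite -rnormN opprB. Qed.

Lemma rnorm0 : rnorm 0 = 0.
Proof. by rewrite /rnorm normr0. Qed.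

Lemma rnorm_eq0 x : rnorm x = 0 -> x = 0.
Proof. by move=> h; apply/normr0_eq0; rewrite normr_rnorm h. Qed.

Lemma rnormZ (t : R) x : rnorm (t%:C%C *: x) = `|t| * rnorm x.
Proof.
have normC : `|t%:C%C| = `|t|%:C%C.
  by rewrite normc_def /= expr0n /= addr0 sqrtr_sqr.
by rewrite /rnorm normrZ normC normr_rnorm /= mul0r subr0.
Qed.

Lemma ltc_rnorm x (t : R) : (`|x| < t%:C%C) = (rnorm x < t).
Proof. by rewrite normr_rnorm ltcR. Qed.

Lemma exists_lt_geometric (c e : R) : 0 < e -> exists n : nat, c / 2 ^+ n < e.
Proof.
move=> e_gt0; have [c_le0|c_gt0] := leP c 0.
  by exists 0%N; rewrite expr0 divr1; lra.
have [N _ HN] := @near_infty_natSinv_expn_lt R (PosNum (divr_gt0 e_gt0 c_gt0)).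
exists N; have := HN N (leqnn N); rewrite /= -(ltr_pM2l c_gt0) mul1r.
by rewrite mulrCA divff ?gt_eqF // mulr1.
Qed.

Lemma geometric_halve (c : R) n : c / 2 ^+ n.+1 = c / 2 ^+ n / 2.
Proof. by rewrite exprS invfM mulrA mulrAC. Qed.

Lemma geometric_le (c : R) n m : 0 <= c -> (n <= m)%N -> c / 2 ^+ m <= c / 2 ^+ n.
Proof.
move=> c_ge0 nm; apply: ler_wpM2l => //.
by rewrite lef_pV2 ?posrE ?exprn_gt0 // ler_eXn2l // ltr1n.
Qed.

End RealNorm.
Arguments rnorm {R V} x.

Section Complete.
Variables (R : realType) (V : completeNormedModType R[i]).
Implicit Types (u : nat -> V) (x : V).

Lemma cauchy_rate_lim u (r : nat -> R) :
  (forall n m, (n <= m)%N -> rnorm (u m - u n) <= r n) ->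
  (forall e, 0 < e -> exists n, r n < e) ->
  exists2 l, u @ \oo --> l & forall n, rnorm (l - u n) <= r n.
Proof.
move=> u_cauchy r_small.
have u_cvg : cvg (u @ \oo).
  apply: cauchy_cvg; apply: cauchy_exP => eps eps_gt0.
  have [e_gt0 ->] := gtc0_Re eps_gt0.
  have [n rn] := r_small _ e_gt0.
  exists (u n), n => // m /= nm.
  by rewrite -ball_normE /= ltc_rnorm rnormBC (le_lt_trans (u_cauchy _ _ nm)).
exists (lim (u @ \oo)) => // n; set l := lim _.
rewrite leNgt; apply/negP => gap.
pose e := (rnorm (l - u n) - r n) / 2.
have e_gt0 : 0 < e by rewrite /e; lra.
have /cvgrPdist_lt/(_ e%:C%C) : u @ \oo --> l by [].
rewrite ltcR => /(_ e_gt0) [N _ near_l].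
have := near_l (maxn N n) (leq_maxl _ _); rewrite ltc_rnorm => close.
have := u_cauchy n (maxn N n) (leq_maxr _ _).
have := rnormD (l - u (maxn N n)) (u (maxn N n) - u n).
by rewrite addrA subrK; rewrite /e in close; lra.
Qed.

Lemma geometric_cvg u x (c : R) :
  (forall k, rnorm (x - u k) <= c / 2 ^+ k) -> u @ \oo --> x.
Proof.
move=> u_close; have c_ge0 : 0 <= c.
  by have := u_close 0%N; rewrite expr0 divr1; have := rnorm_ge0 (x - u 0%N); lra.
apply/cvgrPdist_lt => eps eps_gt0; have [e_gt0 ->] := gtc0_Re eps_gt0.
have [N cN] := exists_lt_geometric c e_gt0.
exists N => // k /= Nk; rewrite ltc_rnorm.
by apply: le_lt_trans (u_close k) _; apply: le_lt_trans cN; apply: geometric_le.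
Qed.

Lemma geometric_steps_lim u (c : R) :
  (forall k, rnorm (u k.+1 - u k) <= c / 2 ^+ k) ->
  exists2 l, u @ \oo --> l & forall n, rnorm (l - u n) <= 2 * c / 2 ^+ n.
Proof.
move=> u_step; have c_ge0 : 0 <= c.
  by have := u_step 0%N; rewrite expr0 divr1; have := rnorm_ge0 (u 1%N - u 0%N); lra.
have telescope n m : (n <= m)%N ->
    rnorm (u m - u n) <= 2 * c / 2 ^+ n - 2 * c / 2 ^+ m.
  elim: m => [|m IH]; first by rewrite leqn0 => /eqP ->; rewrite !subrr rnorm0.
  rewrite leq_eqVlt => /orP [/eqP <-|]; first by rewrite !subrr rnorm0.
  rewrite ltnS => /IH le_nm; have := u_step m.
  have := rnormD (u m.+1 - u m) (u m - u n); rewrite addrA subrK.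
  have halve : 2 * c / 2 ^+ m.+1 = c / 2 ^+ m.
    by rewrite -mulrA geometric_halve mulrC divfK.
  rewrite halve; move: le_nm; rewrite -!mulrA; lra.
apply: cauchy_rate_lim => [n m nm|e e_gt0].
  have : 0 <= 2 * c / 2 ^+ m by rewrite divr_ge0 ?exprn_ge0 ?mulr_ge0.
  have := telescope n m nm; lra.
exact: exists_lt_geometric.
Qed.

Lemma rlipschitz_continuous (f : V -> V) (c : R) :
  (forall x y, rnorm (f x - f y) <= c * rnorm (x - y)) -> continuous f.
Proof.
move=> f_lip x; apply/cvgrPdist_lt => eps eps_gt0.
have [e_gt0 ->] := gtc0_Re eps_gt0; set e := complex.Re eps in e_gt0 *.
have c1_gt0 : 0 < `|c| + 1 by have := normr_ge0 c; lra.
apply/nbhs_normP; exists (e / (`|c| + 1))%:C%C => /=; first by rewrite ltcR divr_gt0.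
move=> y /=; rewrite !ltc_rnorm ltr_pdivlMr // => close.
apply: le_lt_trans (f_lip x y) _.
have := rnorm_ge0 (x - y); have := ler_norm c; nra.
Qed.

Lemma nested_balls_lim (c : nat -> V) (r : nat -> R) :
  (forall k, 0 <= r k) -> (forall k, r k <= 1 / 2 ^+ k) ->
  (forall k, rnorm (c k.+1 - c k) + r k.+1 <= r k) ->
  exists l, forall k, rnorm (l - c k) <= r k.
Proof.
move=> r_ge0 r_small nested.
have nest n m : (n <= m)%N -> rnorm (c m - c n) + r m <= r n.
  elim: m => [|m IH]; first by rewrite leqn0 => /eqP ->; rewrite subrr rnorm0 add0r.
  rewrite leq_eqVlt => /orP [/eqP <-|]; first by rewrite subrr rnorm0 add0r.
  rewrite ltnS => /IH le_nm; have := nested m.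
  by have := rnormD (c m.+1 - c m) (c m - c n); rewrite addrA subrK; lra.
have [l _ l_close] : exists2 l, c @ \oo --> l & forall n, rnorm (l - c n) <= r n.
  apply: cauchy_rate_lim => [n m nm|e e_gt0].
    by have := nest n m nm; have := r_ge0 m; lra.
  have [n small] := exists_lt_geometric 1 e_gt0.
  by exists n; apply: le_lt_trans small.
by exists l.
Qed.

Definition dense_in_ball (A : set V) x0 (rho : R) :=
  forall y, rnorm (y - x0) < rho -> forall e, 0 < e -> exists2 z, A z & rnorm (y - z) < e.

Lemma not_dense_in_ball (A : set V) x0 (rho : R) : ~ dense_in_ball A x0 rho ->
  exists y (e : R), [/\ rnorm (y - x0) < rho, 0 < e & forall z, A z -> e <= rnorm (y - z)].
Proof.
move=> not_dense; apply: contrapT => no_gap; apply: not_dense => y y_near e e_gt0.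
apply: contrapT => far; apply: no_gap; exists y, e; split => // z Az.
by rewrite leNgt; apply/negP => close; apply: far; exists z.
Qed.

(* Baire category: if no [A n] were dense in a ball, shrinking balls avoiding
   [A 0], [A 1], ... in turn would have a common point lying in no [A n]. *)
Lemma baire_cover (A : nat -> set V) : (forall x, exists n, A n x) ->
  exists n x0 (rho : R), 0 < rho /\ dense_in_ball (A n) x0 rho.
Proof.
move=> A_cover; apply: contrapT => nowhere_dense.
have : forall p : nat * (V * R), exists q : V * R, 0 < p.2.2 ->
    [/\ rnorm (q.1 - p.2.1) < p.2.2 / 2, 0 < q.2, q.2 <= p.2.2 / 2 &
      forall z, A p.1 z -> 2 * q.2 <= rnorm (q.1 - z)].
  move=> [n [x0 rho]] /=; have [rho_gt0|rho_le0] := ltP 0 rho; last first.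
    by exists (x0, rho) => /= rho_gt0; exfalso; lra.
  have [|y [e [y_near e_gt0 gap]]] := @not_dense_in_ball (A n) x0 (rho / 2).
    by move=> dense; apply: nowhere_dense; exists n, x0, (rho / 2); split => //; lra.
  exists (y, Num.min (rho / 2) (e / 2)) => _ /=.
  have := ge_min (rho / 2) (rho / 2) (e / 2); have := ge_min (e / 2) (rho / 2) (e / 2).
  rewrite !lexx orbT /= => le_e le_rho; split => //.
  - by rewrite lt_min; apply/andP; split; lra.
  - by move=> z /gap; lra.
move=> /choice [next next_spec].
pose fix ball_seq n := if n is k.+1 then next (k, ball_seq k) else (0 : V, 1 : R).
have r_gt0 n : 0 < (ball_seq n).2.
  by elim: n => [|n IH] /=; [lra | have [] := next_spec (n, ball_seq n) IH].
have [l l_in] : exists l, forall k, rnorm (l - (ball_seq k).1) <= (ball_seq k).2.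
  apply: nested_balls_lim => [k|k|k]; first exact: ltW.
    elim: k => [|k IH]; first by rewrite /= expr0 divr1.
    have [_ _ le_half _] := next_spec (k, ball_seq k) (r_gt0 k).
    by apply: le_trans le_half _; rewrite geometric_halve ler_pM2r.
  by have [step_near _ le_half _] := next_spec (k, ball_seq k) (r_gt0 k); lra.
have [k Akl] := A_cover l.
have [_ _ _ far] := next_spec (k, ball_seq k) (r_gt0 k).
by have := far l Akl; have := l_in k.+1; have := r_gt0 k.+1; rewrite /= rnormBC; lra.
Qed.

End Complete.

Section Subspaces.
Variables (R : realType) (V : completeNormedModType R[i]).
Implicit Types (M N : set V) (x y : V).

Lemma subspace_closed M : closed_subspace M -> closed M.
Proof. by case. Qed.

Lemma subspace0 M : closed_subspace M -> M 0.
Proof. by case. Qed.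

Lemma subspaceD M x y : closed_subspace M -> M x -> M y -> M (x + y).
Proof. by case=> _ _ MD _; apply: MD. Qed.

Lemma subspaceZ M a x : closed_subspace M -> M x -> M (a *: x).
Proof. by case=> _ _ _ MZ; apply: MZ. Qed.

Lemma subspaceN M x : closed_subspace M -> M x -> M (- x).
Proof. by move=> sM Mx; rewrite -scaleN1r; apply: subspaceZ. Qed.

Lemma subspaceB M x y : closed_subspace M -> M x -> M y -> M (x - y).
Proof. by move=> sM Mx My; apply: subspaceD => //; apply: subspaceN. Qed.

Lemma direct_sum_eq0 M N x : direct_sum M N -> M x -> N x -> x = 0.
Proof. by move=> [MN0 _] Mx Nx; have : (M `&` N) x by []; rewrite MN0. Qed.

Lemma direct_sum_uniq M N a b a' b' :
  closed_subspace M -> closed_subspace N -> direct_sum M N ->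
  M a -> N b -> M a' -> N b' -> a + b = a' + b' -> a = a'.
Proof.
move=> sM sN MN Ma Nb Ma' Nb' eq_sum; apply/eqP; rewrite -subr_eq0; apply/eqP.
apply: (direct_sum_eq0 MN); first exact: subspaceB.
have -> : a - a' = b' - b by rewrite -[a](addrK b) eq_sum addrAC [a' + b']addrC addrK.
exact: subspaceB.
Qed.

Lemma direct_sum_proj M N : direct_sum M N ->
  exists P : V -> V, forall x, M (P x) /\ N (x - P x).
Proof.
move=> [_ MN_span]; suff /choice [P PMN] : forall x, exists y, M y /\ N (x - y).
  by exists P.
by move=> x; have [a [b [Ma [Nb ->]]]] := MN_span x; exists a; rewrite addrAC subrr add0r.
Qed.

End Subspaces.


Section Projection.
Variables (R : realType) (V : completeNormedModType R[i]).
Variables (M N : set V) (P : V -> V).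
Hypotheses (sM : closed_subspace M) (sN : closed_subspace N) (MN : direct_sum M N)
  (P_spec : forall x, M (P x) /\ N (x - P x)).

Lemma projE a b : M a -> N b -> P (a + b) = a.
Proof.
move=> Ma Nb; have [MP NP] := P_spec (a + b).
by apply: (direct_sum_uniq sM sN MN MP NP Ma Nb); rewrite addrC subrK.
Qed.

Lemma proj_linear (a : R[i]) x y : P (a *: x + y) = a *: P x + P y.
Proof.
have [MPx NPx] := P_spec x; have [MPy NPy] := P_spec y.
have -> : a *: x + y = (a *: P x + P y) + (a *: (x - P x) + (y - P y)).
  by rewrite addrACA -scalerDr [P x + _]addrC [P y + _]addrC !subrK.
by apply: projE; apply: subspaceD => //; apply: subspaceZ.
Qed.

Lemma proj0 : P 0 = 0.
Proof. by have := projE (subspace0 sM) (subspace0 sN); rewrite addr0. Qed.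

Lemma projD x y : P (x + y) = P x + P y.
Proof. by have := proj_linear 1 x y; rewrite !scale1r. Qed.

Lemma projZ a x : P (a *: x) = a *: P x.
Proof. by have := proj_linear a x 0; rewrite !addr0 proj0 addr0. Qed.

Lemma projB x y : P (x - y) = P x - P y.
Proof. by rewrite projD -scaleN1r projZ scaleN1r. Qed.

Definition bounded_parts (r : R) := [set x | rnorm (P x) <= r /\ rnorm (x - P x) <= r].

Lemma bounded_partsB r s x y : bounded_parts r x -> bounded_parts s y ->
  bounded_parts (r + s) (x - y).
Proof.
move=> [Px xPx] [Py yPy]; split; first by rewrite projB; have := rnormB (P x) (P y); lra.
have -> : x - y - P (x - y) = (x - P x) - (y - P y).
  by rewrite projB !opprB addrACA [RHS]addrACA [- P x + _]addrC.
by have := rnormB (x - P x) (y - P y); lra.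
Qed.

Lemma bounded_parts_cover x : exists n : nat, bounded_parts n%:R x.
Proof.
exists (Num.truncn (Num.max (rnorm (P x)) (rnorm (x - P x)))).+1.
have := truncnS_gt (Num.max (rnorm (P x)) (rnorm (x - P x))).
by rewrite gt_max => /andP [? ?]; split; apply: ltW.
Qed.

Lemma bounded_parts_dense0 : exists r rho : R,
  [/\ 0 < rho, 0 <= r & dense_in_ball (bounded_parts r) 0 rho].
Proof.
have [n [x0 [rho [rho_gt0 dense]]]] := baire_cover bounded_parts_cover.
exists (n%:R + n%:R), rho; split => // y; rewrite subr0 => y_small e e_gt0.
have x0_near : rnorm (x0 - x0) < rho by rewrite subrr rnorm0.
have y_near : rnorm (x0 + y - x0) < rho by rewrite addrAC subrr add0r.
have [z1 Kz1 z1_close] := dense _ y_near (e / 2) ltac:(lra).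
have [z2 Kz2 z2_close] := dense _ x0_near (e / 2) ltac:(lra).
exists (z1 - z2); first exact: bounded_partsB.
have -> : y - (z1 - z2) = (x0 + y - z1) - (x0 - z2).
  by rewrite [x0 + y]addrC [y + x0 - z1]addrAC addrKA opprK opprB addrA addrAC.
by have := rnormB (x0 + y - z1) (x0 - z2); lra.
Qed.

Lemma bounded_parts_approx : exists C : R, 0 <= C /\ forall y (e : R), 0 < e ->
  exists2 z, bounded_parts (C * rnorm y) z & rnorm (y - z) < e.
Proof.
have [r [rho [rho_gt0 r_ge0 dense]]] := bounded_parts_dense0.
exists (2 * r / rho); split; first by rewrite divr_ge0 ?mulr_ge0 // ltW.
move=> y e e_gt0; have [y0|y_neq0] := eqVneq (rnorm y) 0.
  exists 0; last by rewrite (rnorm_eq0 y0) subr0 rnorm0.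
  by rewrite /bounded_parts /= proj0 subr0 rnorm0 y0 mulr0.
have y_gt0 : 0 < rnorm y by rewrite lt_def y_neq0 rnorm_ge0.
pose t := rho / (2 * rnorm y); pose ti := 2 * rnorm y / rho.
have t_gt0 : 0 < t by rewrite divr_gt0 ?mulr_gt0.
have ti_gt0 : 0 < ti by rewrite divr_gt0 ?mulr_gt0.
have tiK : ti * t = 1 by rewrite /t /ti; field; lra.
have scaleK (w : V) : ti%:C%C *: (t%:C%C *: w) = w by rewrite scalerA -rmorphM /= tiK scale1r.
have ty_small : rnorm (t%:C%C *: y - 0) < rho.
  rewrite subr0 rnormZ gtr0_norm // [t * _](_ : _ = rho / 2); first lra.
  by rewrite /t; field; lra.
have [z [Pz zPz] z_close] := dense _ ty_small (t * e) (mulr_gt0 t_gt0 e_gt0).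
have bound : 2 * r / rho * rnorm y = ti * r by rewrite /ti; field; lra.
exists (ti%:C%C *: z); first split.
- by rewrite projZ rnormZ gtr0_norm // bound ler_pM2l.
- by rewrite projZ -scalerBr rnormZ gtr0_norm // bound ler_pM2l.
- rewrite -[y]scaleK -scalerBr rnormZ gtr0_norm //.
  by rewrite -[e]mul1r -tiK -mulrA ltr_pM2l.
Qed.

Lemma proj_approx_seq (C : R) : 0 <= C ->
  (forall y (e : R), 0 < e -> exists2 z, bounded_parts (C * rnorm y) z & rnorm (y - z) < e) ->
  forall x, exists u : nat -> V, [/\ u 0%N = 0,
    forall k, rnorm (x - u k) <= rnorm x / 2 ^+ k &
    forall k, rnorm (P (u k.+1) - P (u k)) <= C * rnorm x / 2 ^+ k].
Proof.
move=> C_ge0 approx x; have [x0|x_neq0] := eqVneq (rnorm x) 0.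
  by exists (fun=> 0); split=> // k; rewrite ?x0 ?(rnorm_eq0 x0) !subrr ?rnorm0 ?mulr0 ?mul0r.
have x_gt0 : 0 < rnorm x by rewrite lt_def x_neq0 rnorm_ge0.
have /choice [g g_spec] : forall p : nat * V, exists z,
    bounded_parts (C * rnorm p.2) z /\ rnorm (p.2 - z) < rnorm x / 2 ^+ p.1.+1.
  move=> [k w]; have [|z] := approx w (rnorm x / 2 ^+ k.+1); last by exists z.
  by rewrite divr_gt0 ?exprn_gt0.
pose fix u k := if k is j.+1 then u j + g (j, x - u j) else 0.
have u_close k : rnorm (x - u k) <= rnorm x / 2 ^+ k.
  elim: k => [|k IH]; first by rewrite subr0 expr0 divr1.
  have [_ /ltW] := g_spec (k, x - u k); by rewrite /= opprD addrA.
exists u; split => // k; rewrite /= projD addrAC subrr add0r.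
have [[Pg _] _] := g_spec (k, x - u k); apply: le_trans Pg _.
by rewrite -mulrA; apply: ler_wpM2l => //; apply: u_close.
Qed.

Lemma proj_bounded : exists C : R, forall x, rnorm (P x) <= C * rnorm x.
Proof.
have [C [C_ge0 approx]] := bounded_parts_approx.
exists (2 * C) => x; have [u [u0 u_close P_steps]] := proj_approx_seq C_ge0 approx x.
have [l Pu_cvg Pu_close] := geometric_steps_lim P_steps.
have u_cvg : u @ \oo --> x := geometric_cvg u_close.
have Ml : M l.
  apply: (closed_cvg _ (subspace_closed sM) _ _ Pu_cvg).
  by apply: nearW => k; case: (P_spec (u k)).
have Nxl : N (x - l).
  apply: (closed_cvg _ (subspace_closed sN) _ _ (cvgB u_cvg Pu_cvg)).
  by apply: nearW => k; case: (P_spec (u k)).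
have -> : P x = l.
  have [MPx NPx] := P_spec x.
  by apply: (direct_sum_uniq sM sN MN MPx NPx Ml Nxl); rewrite !subrKC.
by have := Pu_close 0%N; rewrite u0 proj0 subr0 expr0 divr1 mulrA.
Qed.

Lemma projection_continuous : continuous P.
Proof.
have [C P_bounded] := proj_bounded.
by apply: (@rlipschitz_continuous _ _ _ C) => x y; rewrite -projB.
Qed.

End Projection.


Section Operators.
Variables (R : realType) (V : completeNormedModType R[i]).
Implicit Types (T S A : V -> V) (F : set (set V)) (M N : set V).

Lemma bounded_opD T x y : bounded_op T -> T (x + y) = T x + T y.
Proof. by case=> T_lin _; have := T_lin 1 x y; rewrite !scale1r. Qed.

Lemma bounded_op0 T : bounded_op T -> T 0 = 0.
Proof. by move=> T_bo; apply/(addrI (T 0)); rewrite -bounded_opD // !addr0. Qed.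

Lemma bounded_op_id : bounded_op (@id V).
Proof. by split => // x; apply: cvg_id. Qed.

Lemma bounded_op_comp T S : bounded_op T -> bounded_op S -> bounded_op (T \o S).
Proof.
move=> [T_lin T_cont] [S_lin S_cont]; split; first by move=> a x y /=; rewrite S_lin T_lin.
by move=> x; apply: continuous_comp; [apply: S_cont | apply: T_cont].
Qed.

Lemma op_inverseK T T' x : op_inverse T T' -> T' (T x) = x.
Proof. by case=> _ /(congr1 (fun f => f x)). Qed.

Lemma op_inverseKV T T' x : op_inverse T T' -> T (T' x) = x.
Proof. by case=> /(congr1 (fun f => f x)). Qed.

Lemma op_inverse_sym T T' : op_inverse T T' -> op_inverse T' T.
Proof. by case. Qed.

Lemma op_inverse_comp A A' B B' : op_inverse A A' -> op_inverse B B' ->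
  op_inverse (A \o B) (B' \o A').
Proof.
case=> AA' A'A [BB' B'B]; split.
  by rewrite -compA (compA B) BB' compA AA'.
by rewrite -compA (compA A') A'A compA B'B.
Qed.

Lemma image_op_inverse T T' N : op_inverse T T' -> T' @` (T @` N) = N.
Proof.
move=> TT'; rewrite image_comp; apply/seteqP; split => x.
  by move=> [y Ny <-]; rewrite /= (op_inverseK _ TT').
by move=> Nx; exists x => //=; rewrite (op_inverseK _ TT').
Qed.

Lemma bounded_op_image0 T : bounded_op T -> T @` [set 0] = [set 0].
Proof.
move=> T_bo; apply/seteqP; split => y; first by move=> [x /= -> <-]; rewrite bounded_op0.
by move=> /= ->; exists 0 => //; rewrite bounded_op0.
Qed.

Lemma op_inverse_imageT T T' : op_inverse T T' -> T @` setT = setT.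
Proof. by move=> TT'; apply/seteqP; split => // y _; exists (T' y); rewrite ?(op_inverseKV _ TT'). Qed.

Lemma GrpAlg_of_fixed F A A' : bounded_op A -> bounded_op A' -> op_inverse A A' ->
  (forall N, F N -> A @` N = N) -> GrpAlg F A.
Proof.
move=> A_bo A'_bo AA' A_fix; split; first by split => // N /A_fix ->.
exists A'; split => //; split => // N /A_fix A_N y [x Nx <-].
by move: Nx; rewrite -{1}A_N => -[z Nz <-]; rewrite (op_inverseK _ AA').
Qed.

Lemma GrpAlg_fixed F A N : GrpAlg F A -> F N -> A @` N = N.
Proof.
move=> [[_ A_inv] [A' [[_ A'_inv] AA']]] FN; apply/seteqP; split; first exact: A_inv.
move=> y Ny; exists (A' y); last exact: (op_inverseKV _ AA').
by apply: A'_inv FN _ _; exists y.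
Qed.

Lemma GrpAlg_id F : GrpAlg F id.
Proof.
by apply: (GrpAlg_of_fixed bounded_op_id bounded_op_id) => // N _; rewrite image_id.
Qed.

Lemma Col_of_images F T T' : bounded_op T -> bounded_op T' -> op_inverse T T' ->
  (forall N, F N -> F (T @` N)) -> (forall N, F N -> F (T' @` N)) -> Col F T.
Proof.
move=> T_bo T'_bo TT' T_F T'_F; split; first by split => //; exists T'.
by move=> N _; split => [/T_F //|/T'_F]; rewrite image_op_inverse.
Qed.

Lemma Col_comp F A T : GrpAlg F A -> Col F T -> Col F (A \o T).
Proof.
move=> A_grp [[T_bo [T' [T'_bo TT']]] T_col].
have [[A_bo _] [A' [[A'_bo _] AA']]] := A_grp.
split.
  split; first exact: bounded_op_comp.
  by exists (T' \o A'); split; [exact: bounded_op_comp | exact: op_inverse_comp].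
move=> N sN; rewrite -image_comp (T_col N sN); split => [/(GrpAlg_fixed A_grp) -> //|].
have A'_grp : GrpAlg F A'.
  apply: (GrpAlg_of_fixed A'_bo A_bo (op_inverse_sym AA')) => K FK.
  by rewrite -{1}(GrpAlg_fixed A_grp FK) (image_op_inverse _ AA').
by move=> FA; rewrite -(image_op_inverse (T @` N) AA') (GrpAlg_fixed A'_grp FA).
Qed.

Lemma semidirect_decompI F O :
  O `<=` Col F -> O id -> (forall T1 T2, O T1 -> O T2 -> O (T1 \o T2)) ->
  (forall T, O T -> exists T', O T' /\ op_inverse T T') ->
  (forall S, Col F S -> exists T T', [/\ O T, op_inverse T T' & GrpAlg F (S \o T')]) ->
  (forall S, GrpAlg F S -> O S -> S = id) ->
  semidirect_decomp F O.
Proof.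
move=> O_Col O_id O_comp O_inv factor O_GrpAlg; split => // S; split.
  move=> /factor [T [T' [OT TT' A_grp]]]; exists (S \o T'), T; split => //; split => //.
  by apply: funext => x /=; rewrite (op_inverseK _ TT').
by move=> [A [T [A_grp [/O_Col T_col ->]]]]; apply: Col_comp.
Qed.

Lemma trivial_space_id S : (forall z : V, z = 0) -> S = id.
Proof. by move=> V0; apply: funext => z; rewrite [S z]V0 [RHS]V0. Qed.

Lemma nontrivial_space : ~ (forall z : V, z = 0) -> exists z : V, z <> 0.
Proof.
move=> V_neq0; apply: contrapT => V0; apply: V_neq0 => z.
by apply: contrapT => z_neq0; apply: V0; exists z.
Qed.

End Operators.
Arguments bounded_op_id {R V}.

Section PiecewiseOperator.
Variables (R : realType) (V : completeNormedModType R[i]).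
Implicit Types (M N : set V) (f g : V -> V).

Lemma iso_with_inv_mem M N f g : iso_with_inv M N f g ->
  (forall x, M x -> N (f x)) /\ (forall y, N y -> M (g y)).
Proof. by case. Qed.

Lemma iso_with_invK M N f g : iso_with_inv M N f g -> forall x, M x -> g (f x) = x.
Proof. by case=> _ _ _ _ []. Qed.

Lemma iso_with_invVK M N f g : iso_with_inv M N f g -> forall y, N y -> f (g y) = y.
Proof. by case=> _ _ _ _ []. Qed.

Lemma iso_with_inv0 M N f g : closed_subspace M -> iso_with_inv M N f g ->
  f 0 = 0 /\ g 0 = 0.
Proof.
move=> sM iso; have [f_lin _ _ _ _] := iso; have M0 := subspace0 sM.
have f0 : f 0 = 0.
  by apply/(addrI (f 0)); have := f_lin 1 0 0 M0 M0; rewrite !scale1r !addr0.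
by split => //; rewrite -{1}f0 (iso_with_invK iso).
Qed.

Lemma iso_with_inv_linearV M N f g : closed_subspace M -> iso_with_inv M N f g ->
  forall (a : R[i]) y y', N y -> N y' -> g (a *: y + y') = a *: g y + g y'.
Proof.
move=> sM [f_lin _ _ [_ gN] [gK fK]] a y y' Ny Ny'.
have Mz : M (a *: g y + g y') := subspaceD sM (subspaceZ a sM (gN _ Ny)) (gN _ Ny').
by rewrite -(gK _ Mz) (f_lin _ _ _ (gN _ Ny) (gN _ Ny')) (fK _ Ny) (fK _ Ny').
Qed.

Lemma bounded_op_of_parts M N f g (W : V -> V) :
  closed_subspace M -> closed_subspace N -> direct_sum M N ->
  (forall (a : R[i]) x y, M x -> M y -> f (a *: x + y) = a *: f x + f y) ->
  (forall (a : R[i]) x y, N x -> N y -> g (a *: x + y) = a *: g x + g y) ->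
  {within M, continuous f} -> {within N, continuous g} ->
  (forall x y, M x -> N y -> W (x + y) = g y + f x) -> bounded_op W.
Proof.
move=> sM sN MN f_lin g_lin f_cont g_cont W_parts.
have [P P_spec] := direct_sum_proj MN.
have P_cont := projection_continuous sM sN MN P_spec.
have WE x : W x = g (x - P x) + f (P x).
  by rewrite -{1}(subrKC (P x) x) W_parts //; case: (P_spec x).
split.
  move=> a x y; have [MPx NPx] := P_spec x; have [MPy NPy] := P_spec y.
  rewrite !WE (proj_linear sM sN MN P_spec) f_lin //.
  have -> : a *: x + y - (a *: P x + P y) = a *: (x - P x) + (y - P y).
    by rewrite scalerBr opprD addrACA.
  by rewrite g_lin // scalerDr addrACA.
have -> : W = (g \o (fun x => x - P x)) + (f \o P) by apply: funext => x; rewrite WE.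
move=> x; apply: continuousD.
  apply: (continuous_comp_within (M := N)) => // [z|z]; last by case: (P_spec z).
  by apply: continuousB; [apply: cvg_id | apply: P_cont].
by apply: (continuous_comp_within (M := M)) => // z; case: (P_spec z).
Qed.

End PiecewiseOperator.


Inductive idx := I1 | I2 | I3.

Lemma idx_dec (i j : idx) : {i = j} + {i <> j}.
Proof. decide equality. Qed.

Lemma idx_other (i : idx) : exists j, i <> j.
Proof. by case: i; [exists I2 | exists I1 | exists I1]. Qed.

(* Only meaningful for [i <> j]. *)
Definition third i j := match i, j with
  | I1, I2 | I2, I1 => I3 | I1, I3 | I3, I1 => I2 | _, _ => I1 end.

Lemma third_sym i j : third i j = third j i.
Proof. by case: i; case: j. Qed.

Lemma third_neq i j : i <> j -> j <> third i j /\ i <> third i j.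
Proof. by case: i; case: j. Qed.

Lemma third_cycle i j k : i <> j -> j <> k -> i <> k ->
  [/\ third j k = i, third i k = j & third i j = k].
Proof. by case: i; case: j; case: k. Qed.

Definition swap23 i := match i with I1 => I1 | I2 => I3 | I3 => I2 end.
Definition swap13 i := match i with I1 => I3 | I2 => I2 | I3 => I1 end.
Definition swap12 i := match i with I1 => I2 | I2 => I1 | I3 => I3 end.

Lemma idx_perm_cases s : injective s ->
  s =1 id \/ s =1 swap23 \/ s =1 swap13 \/ s =1 swap12 \/
  s =1 swap23 \o swap13 \/ s =1 swap13 \o swap23.
Proof.
move=> s_inj; case E1 : (s I1); case E2 : (s I2); case E3 : (s I3);
  try (by have := s_inj I1 I2 (etrans E1 (esym E2)));
  try (by have := s_inj I1 I3 (etrans E1 (esym E3)));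
  try (by have := s_inj I2 I3 (etrans E2 (esym E3)));
  do ![left; by case; rewrite /= ?E1 ?E2 ?E3 | right]; by case; rewrite /= ?E1 ?E2 ?E3.
Qed.

Lemma idx_inj_surj (s : idx -> idx) : injective s -> forall j, exists i, s i = j.
Proof.
case/idx_perm_cases => [|[|[|[|[|]]]]] s_eq j;
  case: j; by [exists I1; rewrite s_eq | exists I2; rewrite s_eq | exists I3; rewrite s_eq].
Qed.

Section ThreeSubspaces.
Variables (R : realType) (V : completeNormedModType R[i]) (M1 M2 M3 : set V)
  (V1 U1 V2 U2 V3 U3 W1 W2 W3 : V -> V).
Hypotheses (sM1 : closed_subspace M1) (sM2 : closed_subspace M2)
  (sM3 : closed_subspace M3)
  (M12 : direct_sum M1 M2) (M21 : direct_sum M2 M1)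
  (M13 : direct_sum M1 M3) (M31 : direct_sum M3 M1)
  (M23 : direct_sum M2 M3) (M32 : direct_sum M3 M2)
  (iso1 : iso_with_inv M2 M3 V1 U1) (iso2 : iso_with_inv M1 M3 V2 U2)
  (iso3 : iso_with_inv M1 M2 V3 U3)
  (graph1 : M1 = [set x + V1 x | x in M2]) (graph2 : M2 = [set x + V2 x | x in M1])
  (graph3 : M3 = [set x + V3 x | x in M1])
  (W1_parts : forall x2 x3, M2 x2 -> M3 x3 -> W1 (x2 + x3) = U1 x3 + V1 x2)
  (W2_parts : forall x1 x3, M1 x1 -> M3 x3 -> W2 (x1 + x3) = U2 x3 + V2 x1)
  (W3_parts : forall x1 x2, M1 x1 -> M2 x2 -> W3 (x1 + x2) = U3 x2 + V3 x1).

Definition Mi i := match i with I1 => M1 | I2 => M2 | I3 => M3 end.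

(* [phi i j] is the isomorphism from [Mi i] onto [Mi j] whose graph
   [x + phi i j x] is [Mi (third i j)]. *)
Definition phi i j : V -> V := match i, j with
  | I1, I2 => V3 | I2, I1 => U3 | I2, I3 => V1 | I3, I2 => U1
  | I1, I3 => V2 | I3, I1 => U2 | _, _ => id end.

Lemma Mi_subspace i : closed_subspace (Mi i).
Proof. by case: i. Qed.

Lemma Mi_direct i j : i <> j -> direct_sum (Mi i) (Mi j).
Proof. by case: i; case: j. Qed.

Lemma phi_id i x : phi i i x = x.
Proof. by case: i. Qed.

Lemma phi_mem i j x : Mi i x -> Mi j (phi i j x).
Proof.
have [V1M U1M] := iso_with_inv_mem iso1; have [V2M U2M] := iso_with_inv_mem iso2.
have [V3M U3M] := iso_with_inv_mem iso3.
by case: i; case: j => //= Mx; auto.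
Qed.

Lemma phi_graph i j x : i <> j -> Mi i x -> Mi (third i j) (x + phi i j x).
Proof.
have [_ U1M] := iso_with_inv_mem iso1; have [_ U2M] := iso_with_inv_mem iso2.
have [_ U3M] := iso_with_inv_mem iso3.
case: i; case: j => //= _ Mx.
- by rewrite graph3; exists x.
- by rewrite graph2; exists x.
- by rewrite graph3; exists (U3 x); rewrite ?(iso_with_invVK iso3) 1?addrC; auto.
- by rewrite graph1; exists x.
- by rewrite graph2; exists (U2 x); rewrite ?(iso_with_invVK iso2) 1?addrC; auto.
- by rewrite graph1; exists (U1 x); rewrite ?(iso_with_invVK iso1) 1?addrC; auto.
Qed.

Lemma phi_uniq i j x y : i <> j -> Mi i x -> Mi j y -> Mi (third i j) (x + y) ->
  y = phi i j x.
Proof.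
move=> ij Mx My Mxy; have [jk _] := third_neq ij.
apply/eqP; rewrite -subr_eq0; apply/eqP.
apply: (direct_sum_eq0 (Mi_direct jk)); first by apply: subspaceB (Mi_subspace j) My (phi_mem j Mx).
have -> : y - phi i j x = (x + y) - (x + phi i j x) by rewrite [x + y]addrC addrKA.
exact: subspaceB (Mi_subspace _) Mxy (phi_graph ij Mx).
Qed.

Lemma phi_inv i j x : i <> j -> Mi i x -> phi j i (phi i j x) = x.
Proof.
move=> ij Mx; apply/esym/phi_uniq; [by move=> /esym | exact: phi_mem | done |].
by rewrite third_sym addrC; apply: phi_graph.
Qed.

(* In the cyclic case both sides equal [- (x + phi i j x)]. *)
Lemma phi_cycle i j k x : i <> j -> j <> k -> i <> k -> Mi i x ->
  phi j k (phi i j x) = phi i k x.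
Proof.
move=> ij jk ik Mx; have [t_jk t_ik t_ij] := third_cycle ij jk ik.
have Mk : Mi k (- (x + phi i j x)).
  by apply: subspaceN (Mi_subspace _) _; rewrite -t_ij; apply: phi_graph.
have -> : phi j k (phi i j x) = - (x + phi i j x).
  apply/esym/phi_uniq => //; first exact: phi_mem.
  by rewrite t_jk opprD addrCA subrr addr0; apply: subspaceN (Mi_subspace _) Mx.
apply/phi_uniq => //; rewrite t_ik opprD addrA subrr add0r.
exact: subspaceN (Mi_subspace _) (phi_mem _ Mx).
Qed.

Lemma phi_comp i j k x : Mi i x -> phi j k (phi i j x) = phi i k x.
Proof.
move=> Mx; have [<-|ij] := idx_dec i j; first by rewrite phi_id.
have [<-|jk] := idx_dec j k; first by rewrite phi_id.
have [<-|ik] := idx_dec i k; first by rewrite phi_id phi_inv.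
exact: phi_cycle.
Qed.

Definition acts_by (s : idx -> idx) (T : V -> V) :=
  forall i x, Mi i x -> T x = phi i (s i) x.

Lemma acts_by_id : acts_by id id.
Proof. by move=> i x _; rewrite phi_id. Qed.

Lemma acts_by_ext s t T : s =1 t -> acts_by s T -> acts_by t T.
Proof. by move=> st T_act i x Mx; rewrite -st; apply: T_act. Qed.

Lemma acts_by_comp s t T S : acts_by s T -> acts_by t S -> acts_by (s \o t) (T \o S).
Proof.
move=> T_act S_act i x Mx /=; rewrite (S_act _ _ Mx) (T_act (t i)) ?phi_comp //.
exact: phi_mem.
Qed.

Lemma acts_by_eq s t T S : s =1 t -> acts_by s T -> acts_by t S ->
  bounded_op T -> bounded_op S -> T = S.
Proof.
move=> st T_act S_act T_bo S_bo; apply: funext => z.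
have [_ /(_ z) [a [b [Ma [Mb ->]]]]] := M12.
by rewrite !bounded_opD // (T_act I1) // (T_act I2) // (S_act I1) // (S_act I2) // !st.
Qed.

Lemma acts_by_image s T i : acts_by s T -> T @` Mi i = Mi (s i).
Proof.
move=> T_act; apply/seteqP; split => y.
  by move=> [x Mx <-]; rewrite (T_act _ _ Mx); apply: phi_mem.
move=> My; exists (phi (s i) i y); first exact: phi_mem.
by rewrite (T_act i) ?phi_comp ?phi_id //; apply: phi_mem.
Qed.

Lemma acts_by_inverse s t T S : acts_by s T -> acts_by t S ->
  bounded_op T -> bounded_op S -> s \o t =1 id -> t \o s =1 id -> op_inverse T S.
Proof.
move=> T_act S_act T_bo S_bo st ts; split.
  apply: (acts_by_eq st (acts_by_comp T_act S_act) acts_by_id) => //.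
  - exact: bounded_op_comp.
  - exact: bounded_op_id.
apply: (acts_by_eq ts (acts_by_comp S_act T_act) acts_by_id) => //.
- exact: bounded_op_comp.
- exact: bounded_op_id.
Qed.

Lemma acts_by_W1 : acts_by swap23 W1.
Proof.
have [V10 U10] := iso_with_inv0 sM2 iso1; have [V1M _] := iso_with_inv_mem iso1.
case => x /= Mx.
- by move: Mx; rewrite graph1 => -[a Ma <-]; rewrite W1_parts ?(iso_with_invK iso1); auto.
- by rewrite -[x]addr0 W1_parts ?U10 ?add0r ?addr0 //; apply: subspace0.
- by rewrite -[x]add0r W1_parts ?V10 ?addr0 ?add0r //; apply: subspace0.
Qed.

Lemma acts_by_W2 : acts_by swap13 W2.
Proof.
have [V20 U20] := iso_with_inv0 sM1 iso2; have [V2M _] := iso_with_inv_mem iso2.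
case => x /= Mx.
- by rewrite -[x]addr0 W2_parts ?U20 ?add0r ?addr0 //; apply: subspace0.
- by move: Mx; rewrite graph2 => -[a Ma <-]; rewrite W2_parts ?(iso_with_invK iso2); auto.
- by rewrite -[x]add0r W2_parts ?V20 ?addr0 ?add0r //; apply: subspace0.
Qed.

Lemma acts_by_W3 : acts_by swap12 W3.
Proof.
have [V30 U30] := iso_with_inv0 sM1 iso3; have [V3M _] := iso_with_inv_mem iso3.
case => x /= Mx.
- by rewrite -[x]addr0 W3_parts ?U30 ?add0r ?addr0 //; apply: subspace0.
- by rewrite -[x]add0r W3_parts ?V30 ?addr0 ?add0r //; apply: subspace0.
- by move: Mx; rewrite graph3 => -[a Ma <-]; rewrite W3_parts ?(iso_with_invK iso3); auto.
Qed.

Lemma bounded_W1 : bounded_op W1.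
Proof.
have [V1_lin V1_cont U1_cont _ _] := iso1.
exact: (bounded_op_of_parts sM2 sM3 M23 V1_lin (iso_with_inv_linearV sM2 iso1)
  V1_cont U1_cont W1_parts).
Qed.

Lemma bounded_W2 : bounded_op W2.
Proof.
have [V2_lin V2_cont U2_cont _ _] := iso2.
exact: (bounded_op_of_parts sM1 sM3 M13 V2_lin (iso_with_inv_linearV sM1 iso2)
  V2_cont U2_cont W2_parts).
Qed.

Lemma bounded_W3 : bounded_op W3.
Proof.
have [V3_lin V3_cont U3_cont _ _] := iso3.
exact: (bounded_op_of_parts sM1 sM2 M12 V3_lin (iso_with_inv_linearV sM1 iso3)
  V3_cont U3_cont W3_parts).
Qed.

Lemma Mi_eq0_trivial j : (forall y, Mi j y -> y = 0) -> forall z : V, z = 0.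
Proof.
move=> Mj0 z; have [k jk] := idx_other j.
have [kl jl] := third_neq jk.
have [_ /(_ z) [a [b [Ma [Mb ->]]]]] := Mi_direct jk.
have [_ /(_ (a + b)) [a' [b' [Ma' [Mb' E]]]]] := Mi_direct jl.
rewrite (Mj0 _ Ma) add0r in E *; rewrite (Mj0 _ Ma') add0r in E.
by apply: (direct_sum_eq0 (Mi_direct kl)) => //; rewrite E.
Qed.

Lemma Mi_sub_trivial i j : i <> j -> Mi j `<=` Mi i -> forall z : V, z = 0.
Proof.
move=> ij Mji; apply: (Mi_eq0_trivial (j := j)) => y My.
exact: (direct_sum_eq0 (Mi_direct ij) (Mji _ My) My).
Qed.

Lemma Mi_inj i j : (exists z : V, z <> 0) -> Mi i = Mi j -> i = j.
Proof.
move=> [z z_neq0] Mij; have [//|ij] := idx_dec i j.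
by case: z_neq0; apply: (Mi_sub_trivial ij); rewrite Mij.
Qed.

Lemma image_Mi_proper S S' i : (exists z : V, z <> 0) -> bounded_op S ->
  op_inverse S S' -> S @` Mi i <> [set 0] /\ S @` Mi i <> setT.
Proof.
move=> [z z_neq0] S_bo SS'; split => [SMi0|SMiT]; apply: z_neq0.
  apply: (Mi_eq0_trivial (j := i)) => y My; have : (S @` Mi i) (S y) by exists y.
  rewrite SMi0 /= => Sy0.
  by rewrite -(op_inverseK y SS') Sy0 -{1}(bounded_op0 S_bo) (op_inverseK _ SS').
have MiT w : Mi i w.
  have : (S @` Mi i) (S w) by rewrite SMiT.
  by move=> [m Mm /(congr1 S')]; rewrite !(op_inverseK _ SS') => <-.
have [j ij] := idx_other i.
by apply: (Mi_sub_trivial ij) => w _; apply: MiT.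
Qed.

Definition famT : set (set V) :=
  [set N | N = [set 0] \/ N = M1 \/ N = M2 \/ N = M3 \/ N = setT].

Definition OT : set (V -> V) :=
  [set S | S = id \/ S = W1 \/ S = W2 \/ S = W3 \/ S = W1 \o W2 \/ S = W2 \o W1].

Lemma famT_Mi i : famT (Mi i).
Proof. by case: i; rewrite /famT /=; tauto. Qed.

Lemma famT_image_fixed A A' : bounded_op A -> op_inverse A A' ->
  (forall i, A @` Mi i = Mi i) -> forall N, famT N -> A @` N = N.
Proof.
move=> A_bo AA' A_Mi N [->|[->|[->|[->|->]]]].
- exact: bounded_op_image0.
- exact: (A_Mi I1).
- exact: (A_Mi I2).
- exact: (A_Mi I3).
- exact: op_inverse_imageT AA'.
Qed.

Lemma OT_acts_by T : OT T -> exists s, [/\ acts_by s T, bounded_op T & injective s].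
Proof.
case=> [->|[->|[->|[->|[->|->]]]]].
- by exists id; split; [exact: acts_by_id | exact: bounded_op_id |].
- by exists swap23; split; [exact: acts_by_W1 | exact: bounded_W1 | case; case].
- by exists swap13; split; [exact: acts_by_W2 | exact: bounded_W2 | case; case].
- by exists swap12; split; [exact: acts_by_W3 | exact: bounded_W3 | case; case].
- exists (swap23 \o swap13); split; last by case; case.
    exact: acts_by_comp acts_by_W1 acts_by_W2.
  exact: bounded_op_comp bounded_W1 bounded_W2.
- exists (swap13 \o swap23); split; last by case; case.
    exact: acts_by_comp acts_by_W2 acts_by_W1.
  exact: bounded_op_comp bounded_W2 bounded_W1.
Qed.

Lemma acts_by_OT s : injective s -> exists T, OT T /\ acts_by s T.
Proof.
case/idx_perm_cases => [|[|[|[|[|]]]]] s_eq.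
- by exists id; split; [left | apply: acts_by_ext acts_by_id].
- by exists W1; split; [right; left | apply: acts_by_ext acts_by_W1].
- by exists W2; split; [right; right; left | apply: acts_by_ext acts_by_W2].
- by exists W3; split; [right; right; right; left | apply: acts_by_ext acts_by_W3].
- exists (W1 \o W2); split; first by right; right; right; right; left.
  exact: acts_by_ext (acts_by_comp acts_by_W1 acts_by_W2).
- exists (W2 \o W1); split; first by right; right; right; right; right.
  exact: acts_by_ext (acts_by_comp acts_by_W2 acts_by_W1).
Qed.

Lemma OT_comp T1 T2 : OT T1 -> OT T2 -> OT (T1 \o T2).
Proof.
move=> /OT_acts_by [s [T1_act T1_bo s_inj]] /OT_acts_by [t [T2_act T2_bo t_inj]].
have [T [OT_T T_act]] := acts_by_OT (inj_comp s_inj t_inj).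
have [_ [_ T_bo _]] := OT_acts_by OT_T.
rewrite (acts_by_eq (frefl _) (acts_by_comp T1_act T2_act) T_act) //.
exact: bounded_op_comp.
Qed.

Lemma OT_inv T : OT T -> exists T', OT T' /\ op_inverse T T'.
Proof.
move=> /OT_acts_by [s [T_act T_bo s_inj]].
have /choice [t st] := idx_inj_surj s_inj.
have t_inj : injective t by move=> i j /(congr1 s); rewrite !st.
have [T' [OT_T' T'_act]] := acts_by_OT t_inj.
have [_ [_ T'_bo _]] := OT_acts_by OT_T'.
exists T'; split => //; apply: (acts_by_inverse T_act T'_act) => // i /=.
by apply: s_inj; rewrite st.
Qed.

Lemma OT_Col T : OT T -> Col famT T.
Proof.
move=> OT_T; have [s [T_act T_bo _]] := OT_acts_by OT_T.
have [T' [OT_T' TT']] := OT_inv OT_T; have [t [T'_act T'_bo _]] := OT_acts_by OT_T'.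
have image_famT S u : acts_by u S -> bounded_op S -> (exists S', op_inverse S S') ->
    forall N, famT N -> famT (S @` N).
  move=> S_act S_bo [S' SS'] N [->|[->|[->|[->|->]]]].
  - by rewrite bounded_op_image0 //; left.
  - by rewrite -/(Mi I1) (acts_by_image _ S_act); apply: famT_Mi.
  - by rewrite -/(Mi I2) (acts_by_image _ S_act); apply: famT_Mi.
  - by rewrite -/(Mi I3) (acts_by_image _ S_act); apply: famT_Mi.
  - by rewrite (op_inverse_imageT SS'); right; right; right; right.
apply: (Col_of_images T_bo T'_bo TT').
  by apply: (image_famT T s T_act T_bo); exists T'.
by apply: (image_famT T' t T'_act T'_bo); exists T; apply: op_inverse_sym.
Qed.

Lemma GrpAlg_OT_id S : GrpAlg famT S -> OT S -> S = id.
Proof.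
move=> [[_ S_inv] _] /OT_acts_by [s [S_act S_bo _]].
have moved i : s i <> i -> S = id.
  move=> si_neq; apply: trivial_space_id; apply: (Mi_sub_trivial (nesym si_neq)).
  by rewrite -(acts_by_image _ S_act); apply: S_inv; apply: famT_Mi.
have [s1|] := idx_dec (s I1) I1; last exact: moved.
have [s2|] := idx_dec (s I2) I2; last exact: moved.
have [s3|] := idx_dec (s I3) I3; last exact: moved.
by apply: (acts_by_eq _ S_act acts_by_id) => //; [case | exact: bounded_op_id].
Qed.

Lemma famT_Col_factor S : Col famT S ->
  exists T T', [/\ OT T, op_inverse T T' & GrpAlg famT (S \o T')].
Proof.
move=> [[S_bo [S' [S'_bo SS']]] S_col].
have [V0|/nontrivial_space V_neq0] := pselect (forall z : V, z = 0).
  exists id, id; split; [by left | by [] |].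
  by rewrite (trivial_space_id S V0); exact: GrpAlg_id.
have /choice [s S_Mi] : forall i, exists j, S @` Mi i = Mi j.
  move=> i; have [SMi0 SMiT] := image_Mi_proper i V_neq0 S_bo SS'.
  have := (S_col _ (Mi_subspace i)).1 (famT_Mi i).
  by case=> [|[|[|[|]]]] // E; [exists I1 | exists I2 | exists I3].
have s_inj : injective s.
  move=> i j sij; apply: (Mi_inj V_neq0).
  by rewrite -(image_op_inverse (Mi i) SS') -(image_op_inverse (Mi j) SS') !S_Mi sij.
have [T [OT_T T_act]] := acts_by_OT s_inj.
have [T' [OT_T' TT']] := OT_inv OT_T.
have [_ [_ T_bo _]] := OT_acts_by OT_T; have [_ [_ T'_bo _]] := OT_acts_by OT_T'.
exists T, T'; split => //.
have ST'_inv := op_inverse_comp SS' (op_inverse_sym TT').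
apply: (GrpAlg_of_fixed (bounded_op_comp S_bo T'_bo) (bounded_op_comp T_bo S'_bo) ST'_inv).
apply: (famT_image_fixed (bounded_op_comp S_bo T'_bo) ST'_inv) => j.
have [i <-] := idx_inj_surj s_inj j.
by rewrite -image_comp -{1}(acts_by_image i T_act) (image_op_inverse _ TT') S_Mi.
Qed.

Lemma semidirect_famT : semidirect_decomp famT OT.
Proof.
apply: semidirect_decompI.
- exact: OT_Col.
- by left.
- exact: OT_comp.
- exact: OT_inv.
- exact: famT_Col_factor.
- exact: GrpAlg_OT_id.
Qed.

Definition famD : set (set V) := [set N | N = [set 0] \/ N = M1 \/ N = M2 \/ N = setT].

Definition OD : set (V -> V) := [set S | S = id \/ S = W3].

Lemma W3_inverse : op_inverse W3 W3.
Proof. by apply: (acts_by_inverse acts_by_W3 acts_by_W3 bounded_W3 bounded_W3); case. Qed.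

Lemma W3_M1 : W3 @` M1 = M2.
Proof. exact: (acts_by_image I1 acts_by_W3). Qed.

Lemma W3_M2 : W3 @` M2 = M1.
Proof. exact: (acts_by_image I2 acts_by_W3). Qed.

Lemma famD_GrpAlg A A' : bounded_op A -> bounded_op A' -> op_inverse A A' ->
  A @` M1 = M1 -> A @` M2 = M2 -> GrpAlg famD A.
Proof.
move=> A_bo A'_bo AA' AM1 AM2; apply: (GrpAlg_of_fixed A_bo A'_bo AA').
move=> N [->|[->|[->|->]]] //; [exact: bounded_op_image0 | exact: op_inverse_imageT AA'].
Qed.

Lemma OD_Col T : OD T -> Col famD T.
Proof.
case=> ->; first by apply: (Col_of_images bounded_op_id bounded_op_id) => // N; rewrite image_id.
have W3_famD N : famD N -> famD (W3 @` N).
  case=> [->|[->|[->|->]]].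
  - by rewrite bounded_op_image0 //; [left | exact: bounded_W3].
  - by rewrite W3_M1; right; right; left.
  - by rewrite W3_M2; right; left.
  - by rewrite (op_inverse_imageT W3_inverse); right; right; right.
exact: (Col_of_images bounded_W3 bounded_W3 W3_inverse).
Qed.

Lemma GrpAlg_OD_id S : GrpAlg famD S -> OD S -> S = id.
Proof.
move=> S_grp [//|S_W3]; apply: trivial_space_id.
apply: (Mi_sub_trivial (i := I1) (j := I2)) => //=.
have [[_ S_inv] _] := S_grp; rewrite -W3_M1 -S_W3.
by apply: S_inv; right; left.
Qed.

Lemma famD_Col_factor S : Col famD S ->
  exists T T', [/\ OD T, op_inverse T T' & GrpAlg famD (S \o T')].
Proof.
move=> [[S_bo [S' [S'_bo SS']]] S_col].
have [V0|/nontrivial_space V_neq0] := pselect (forall z : V, z = 0).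
  exists id, id; split; [by left | by [] |].
  by rewrite (trivial_space_id S V0); exact: GrpAlg_id.
have SM12 : S @` M1 <> S @` M2.
  move=> SM; have := Mi_inj V_neq0 (i := I1) (j := I2).
  by rewrite /= -(image_op_inverse M1 SS') SM (image_op_inverse M2 SS') => /(_ erefl).
have [SM10 SM1T] := image_Mi_proper I1 V_neq0 S_bo SS'.
have [SM20 SM2T] := image_Mi_proper I2 V_neq0 S_bo SS'.
have := (S_col _ sM1).1 (or_intror (or_introl erefl)).
have := (S_col _ sM2).1 (or_intror (or_intror (or_introl erefl))).
case=> [//|[SM2|[SM2|//]]]; case=> [//|[SM1|[SM1|//]]]; try by case: SM12; rewrite SM1 SM2.
- exists W3, W3; split; [by right | exact: W3_inverse |].
  apply: (famD_GrpAlg (bounded_op_comp S_bo bounded_W3) (bounded_op_comp bounded_W3 S'_bo)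
    (op_inverse_comp SS' W3_inverse)).
  - by rewrite -image_comp W3_M1.
  - by rewrite -image_comp W3_M2.
- exists id, id; split; [by left | by [] |].
  exact: (famD_GrpAlg S_bo S'_bo SS').
Qed.

Lemma semidirect_famD : semidirect_decomp famD OD.
Proof.
apply: semidirect_decompI.
- exact: OD_Col.
- by left.
- move=> T1 T2 [->|->] [->|->]; [by left | by right | by right |].
  by left; case: W3_inverse.
- move=> T [->|->]; first by exists id; split; [left |].
  by exists W3; split; [right | exact: W3_inverse].
- exact: famD_Col_factor.
- exact: GrpAlg_OD_id.
Qed.

End ThreeSubspaces.


Theorem theorem5p4 (R : realType) (V : completeNormedModType R[i])
  (M1 M2 M3 : set V)
  (V1 U1 V2 U2 V3 U3 W1 W2 W3 : V -> V) :
  closed_subspace M1 -> closed_subspace M2 -> closed_subspace M3 ->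
  direct_sum M1 M2 -> direct_sum M2 M1 ->
  direct_sum M1 M3 -> direct_sum M3 M1 ->
  direct_sum M2 M3 -> direct_sum M3 M2 ->
  iso_with_inv M2 M3 V1 U1 ->
  iso_with_inv M1 M3 V2 U2 ->
  iso_with_inv M1 M2 V3 U3 ->
  M1 = [set x + V1 x | x in M2] ->
  M2 = [set x + V2 x | x in M1] ->
  M3 = [set x + V3 x | x in M1] ->
  (forall x2 x3, M2 x2 -> M3 x3 -> W1 (x2 + x3) = U1 x3 + V1 x2) ->
  (forall x1 x3, M1 x1 -> M3 x3 -> W2 (x1 + x3) = U2 x3 + V2 x1) ->
  (forall x1 x2, M1 x1 -> M2 x2 -> W3 (x1 + x2) = U3 x2 + V3 x1) ->
  let D : set (set V) :=
    [set N | N = [set 0] \/ N = M1 \/ N = M2 \/ N = setT] in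
  let T : set (set V) :=
    [set N | N = [set 0] \/ N = M1 \/ N = M2 \/ N = M3 \/ N = setT] in
  semidirect_decomp D [set S | S = id \/ S = W3] /\
  semidirect_decomp T
    [set S | S = id \/ S = W1 \/ S = W2 \/ S = W3 \/
             S = W1 \o W2 \/ S = W2 \o W1].
Proof.
move=> sM1 sM2 sM3 M12 M21 M13 M31 M23 M32 iso1 iso2 iso3 graph1 graph2 graph3
  W1_parts W2_parts W3_parts D T; split.
- exact: (semidirect_famD sM1 sM2 sM3 M12 M21 M13 M31 M23 M32 iso1 iso2 iso3
    graph1 graph2 graph3 W3_parts).
- exact: (semidirect_famT sM1 sM2 sM3 M12 M21 M13 M31 M23 M32 iso1 iso2 iso3
    graph1 graph2 graph3 W1_parts W2_parts W3_parts).
Qed.
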